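(* For complex numbers $x,y$ with $y\ne 0$, the double series \[ A(x,y)=\sum_{n=0}^{\infty} x^n\binom{2n}{n}\sum_{k=0}^n\binom{n}{k}^2\binom{2k}{n}(-1)^k y^{2k-n} \] converges absolutely provided \[ \left|16xy\left(\sqrt{\left|\frac{4x}{y}\right|}+\sqrt{1+\left|\frac{4x}{y}\right|}\right)^2\right|<1. \]
   Context: $\binom{2k}{n}=0$ for $n>2k$; absolute convergence means convergence of the double series of absolute values of all terms. *)

From Stdlib Require Import Reals ZArith.
From Coquelicot Require Import Coquelicot.
Open Scope R_scope.

Fixpoint Cpown (z : C) (n : nat) : C :=
  match n with O => RtoC 1 | S m => Cmult z (Cpown z m) end.

Definition CpowZ (z : C) (m : Z) : C :=
  match m with
  | Z0 => RtoC 1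
  | Zpos p => Cpown z (Pos.to_nat p)
  | Zneg p => Cinv (Cpown z (Pos.to_nat p))
  end.

Definition binom (n k : nat) : R :=
  if (k <=? n)%nat then Binomial.C n k else 0.

Definition Aterm (x y : C) (n k : nat) : C :=
  Cmult (Cmult (Cmult (Cpown x n) (RtoC (binom (2*n) n)))
               (RtoC (binom n k ^ 2 * binom (2*k) n * (-1) ^ k)))
        (CpowZ y (Z.of_nat (2*k) - Z.of_nat n)%Z).

(** Only the terms with [n <= 2k] survive; writing [n = 2j+m], [k = j+m],
    the identity [C(n,k)^2 C(2k,n) = C(2k,k) C(n,2j) C(2j,j)] and the bound
    [C(2i,i) <= 4^i] bound the modulus of the [(n,k)] term by
    [16^n |x|^n |y|^m C(n,2j)].  The binomial theorem gives
    [C(n,2j) u^(2j) <= (1+u)^n] for every [u >= 0], and the choice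
    [u = s^2 - 1] with [s = sqrt t + sqrt (1+t)], [t = |4x/y|], which solves
    [u^2 |y| = 16 |x| (1+u)], turns this into [rho^k] with
    [rho = 16 |x| |y| (1+u) < 1].  Row [n] is then at most [(n+1) rho^(n/2)],
    a summable sequence. *)

From Stdlib Require Import Reals ZArith Lia Lra.
From Coquelicot Require Import Coquelicot.
Open Scope R_scope.

Lemma binom_out n k : (n < k)%nat -> binom n k = 0.
Proof.
  intros Hnk; unfold binom.
  destruct (Nat.leb_spec k n); [lia | reflexivity].
Qed.

Lemma binom_in n k : (k <= n)%nat -> binom n k = Binomial.C n k.
Proof. intros Hkn; unfold binom; apply Nat.leb_le in Hkn; now rewrite Hkn. Qed.

Lemma binomial_C_ge0 n k : 0 <= Binomial.C n k.
Proof.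
  unfold Binomial.C, Rdiv; apply Rmult_le_pos; [apply pos_INR|].
  left; apply Rinv_0_lt_compat, Rmult_lt_0_compat; apply INR_fact_lt_0.
Qed.

Lemma binom_ge0 n k : 0 <= binom n k.
Proof. unfold binom; destruct (k <=? n)%nat; [apply binomial_C_ge0 | lra]. Qed.

Lemma sum_f_R0_ge_term (f : nat -> R) n i :
  (forall k, 0 <= f k) -> (i <= n)%nat -> f i <= sum_f_R0 f n.
Proof.
  intros Hf; induction n as [|n IHn]; intros Hi; simpl.
  - replace i with 0%nat by lia; lra.
  - destruct (Nat.eq_dec i (S n)) as [->|Hne].
    + pose proof (cond_pos_sum f n Hf); lra.
    + specialize (IHn ltac:(lia)); specialize (Hf (S n)); lra.
Qed.

Lemma binom_mul_pow_le (u : R) n m : 0 <= u -> binom n m * u ^ m <= (1 + u) ^ n.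
Proof.
  intros Hu; destruct (le_lt_dec m n) as [Hmn|Hnm].
  - rewrite binom_in, Rplus_comm, binomial by exact Hmn.
    replace (Binomial.C n m * u ^ m) with (Binomial.C n m * u ^ m * 1 ^ (n - m))
      by (rewrite pow1; ring).
    apply (sum_f_R0_ge_term (fun i => Binomial.C n i * u ^ i * 1 ^ (n - i)));
      [intros i | exact Hmn].
    rewrite pow1, Rmult_1_r; apply Rmult_le_pos; [apply binomial_C_ge0 | now apply pow_le].
  - rewrite binom_out, Rmult_0_l by exact Hnm; apply pow_le; lra.
Qed.

Lemma central_binom_le n : binom (2 * n) n <= 4 ^ n.
Proof.
  pose proof (binom_mul_pow_le 1 (2 * n) n ltac:(lra)) as H.
  rewrite pow1, Rmult_1_r, pow_mult in H; now replace ((1 + 1) ^ 2) with 4 in H by ring.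
Qed.

Lemma binom_sq_mul_binom_double j m :
  binom (2 * j + m) (j + m) ^ 2 * binom (2 * (j + m)) (2 * j + m) =
  binom (2 * (j + m)) (j + m) * binom (2 * j + m) (2 * j) * binom (2 * j) j.
Proof.
  rewrite !binom_in by lia; unfold Binomial.C.
  replace (2 * j + m - (j + m))%nat with j by lia.
  replace (2 * (j + m) - (2 * j + m))%nat with m by lia.
  replace (2 * (j + m) - (j + m))%nat with (j + m)%nat by lia.
  replace (2 * j + m - 2 * j)%nat with m by lia.
  replace (2 * j - j)%nat with j by lia.
  pose proof (INR_fact_neq_0 j); pose proof (INR_fact_neq_0 m).
  pose proof (INR_fact_neq_0 (j + m)); pose proof (INR_fact_neq_0 (2 * j + m)).
  pose proof (INR_fact_neq_0 (2 * j)).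
  field; repeat split; assumption.
Qed.

(* [u] is the positive root of [u^2 b = 16 a (1+u)], the optimal choice in
   [C(n,2j) u^(2j) <= (1+u)^n]. *)
Lemma binom_product_le (a b u : R) j m :
  0 <= a -> 0 <= b -> 0 <= u -> u ^ 2 * b = 16 * a * (1 + u) ->
  a ^ (2 * j + m) * binom (2 * (2 * j + m)) (2 * j + m)
    * (binom (2 * j + m) (j + m) ^ 2 * binom (2 * (j + m)) (2 * j + m)) * b ^ m
  <= (16 * a * b * (1 + u)) ^ (j + m).
Proof.
  intros Ha Hb Hu Hab.
  rewrite binom_sq_mul_binom_double.
  set (n := (2 * j + m)%nat); set (k := (j + m)%nat).
  assert (Hn : n = (k + j)%nat) by (unfold n, k; lia).
  assert (Hcentral : binom (2 * n) n * binom (2 * k) k * binom (2 * j) j <= 16 ^ n).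
  { replace (16 ^ n) with (4 ^ n * 4 ^ k * 4 ^ j).
    2: { replace 16 with (4 ^ 2) by ring; rewrite <- pow_mult, <- !pow_add.
         f_equal; unfold n, k; lia. }
    pose proof (binom_ge0 (2 * n) n); pose proof (binom_ge0 (2 * k) k).
    apply Rmult_le_compat; [nra | apply binom_ge0 | | apply central_binom_le].
    apply Rmult_le_compat; auto using central_binom_le. }
  assert (Hbinom : binom n (2 * j) * (16 * a) ^ j <= (1 + u) ^ k * b ^ j).
  { pose proof (binom_mul_pow_le u n (2 * j) Hu) as H.
    apply (Rmult_le_compat_r (b ^ j)) in H; [|now apply pow_le].
    rewrite pow_mult, Rmult_assoc, <- Rpow_mult_distr, Hab, Hn, pow_add in H.
    apply (Rmult_le_reg_r ((1 + u) ^ j)); [apply pow_lt; lra|].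
    rewrite <- Hn, !Rpow_mult_distr in H; rewrite Rpow_mult_distr; lra. }
  assert (Hsplit : forall z, z ^ n = z ^ k * z ^ j) by (intros; rewrite Hn; apply pow_add).
  pose proof (binom_ge0 n (2 * j)).
  assert (0 <= a ^ n * b ^ m) by (apply Rmult_le_pos; now apply pow_le).
  apply Rle_trans with (a ^ n * b ^ m * binom n (2 * j) * 16 ^ n).
  { replace (a ^ n * binom (2 * n) n * (binom (2 * k) k * binom n (2 * j) * binom (2 * j) j) * b ^ m)
      with (a ^ n * b ^ m * binom n (2 * j) * (binom (2 * n) n * binom (2 * k) k * binom (2 * j) j))
      by ring.
    apply Rmult_le_compat_l; [nra | exact Hcentral]. }
  replace (a ^ n * b ^ m * binom n (2 * j) * 16 ^ n)
    with ((16 * a) ^ k * b ^ m * (binom n (2 * j) * (16 * a) ^ j))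
    by (rewrite !Rpow_mult_distr, !Hsplit; ring).
  replace ((16 * a * b * (1 + u)) ^ k) with ((16 * a) ^ k * b ^ m * ((1 + u) ^ k * b ^ j))
    by (unfold k; rewrite !Rpow_mult_distr, !pow_add; ring).
  apply Rmult_le_compat_l; [apply Rmult_le_pos; apply pow_le; lra | exact Hbinom].
Qed.

Lemma pow_le_pow_le1 (x : R) p q : 0 <= x <= 1 -> (p <= q)%nat -> x ^ q <= x ^ p.
Proof.
  intros Hx Hpq; replace q with (p + (q - p))%nat by lia; rewrite pow_add.
  rewrite <- (Rmult_1_r (x ^ p)) at 2; apply Rmult_le_compat_l; [apply pow_le; lra|].
  rewrite <- (pow1 (q - p)); apply pow_incr; lra.
Qed.

Lemma succ_mul_pow_le (q : R) n : 0 <= q < 1 -> INR (S n) * q ^ n <= / (1 - q).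
Proof.
  intros Hq; apply Rle_trans with (sum_f_R0 (fun i => q ^ i) n).
  - rewrite Rmult_comm, <- sum_cte; apply sum_Rle; intros i Hi.
    apply pow_le_pow_le1; [lra | exact Hi].
  - rewrite tech3 by lra; unfold Rdiv.
    rewrite <- (Rmult_1_l (/ (1 - q))) at 2.
    apply Rmult_le_compat_r; [left; apply Rinv_0_lt_compat; lra|].
    pose proof (pow_le q (S n)); lra.
Qed.

(* Compare with the geometric series of ratio [sqrt q]. *)
Lemma ex_series_succ_mul_pow (q : R) :
  0 <= q < 1 -> ex_series (fun n => INR (S n) * q ^ n).
Proof.
  intros Hq; set (r := sqrt q).
  assert (Hr : 0 <= r < 1).
  { split; [apply sqrt_pos|]; unfold r; rewrite <- sqrt_1; apply sqrt_lt_1_alt; lra. }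
  assert (Hqr : forall n, q ^ n = r ^ n * r ^ n).
  { intros n; rewrite <- Rpow_mult_distr; unfold r; now rewrite sqrt_sqrt by lra. }
  apply (@ex_series_le R_AbsRing R_CompleteNormedModule _ (fun n => / (1 - r) * r ^ n)).
  - intros n; change (norm ?z) with (Rabs z).
    rewrite Rabs_pos_eq by (apply Rmult_le_pos; [apply pos_INR | apply pow_le; lra]).
    rewrite Hqr, (Rmult_comm (/ (1 - r))), <- Rmult_assoc, (Rmult_comm (INR (S n))), Rmult_assoc.
    apply Rmult_le_compat_l; [apply pow_le; lra | now apply succ_mul_pow_le].
  - apply (ex_series_scal (/ (1 - r)) (fun n => r ^ n)).
    apply ex_series_geom; rewrite Rabs_pos_eq; lra.
Qed.

Lemma Cmod_Cpown z n : Cmod (Cpown z n) = Cmod z ^ n.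
Proof. induction n as [|n IHn]; simpl; [apply Cmod_1 | now rewrite Cmod_mult, IHn]. Qed.

Lemma CpowZ_of_nat z m : CpowZ z (Z.of_nat m) = Cpown z m.
Proof. destruct m; [reflexivity | simpl; now rewrite SuccNat2Pos.id_succ]. Qed.

Lemma Cmod_Aterm x y n k :
  Cmod (Aterm x y n k) =
  Cmod x ^ n * binom (2 * n) n * (binom n k ^ 2 * binom (2 * k) n)
    * Cmod (CpowZ y (Z.of_nat (2 * k) - Z.of_nat n)).
Proof.
  unfold Aterm; rewrite !Cmod_mult, !Cmod_R, Cmod_Cpown, !Rabs_mult, pow_1_abs.
  rewrite (Rabs_pos_eq (binom (2 * n) n)), (Rabs_pos_eq (binom (2 * k) n)),
    (Rabs_pos_eq (binom n k ^ 2)) by (try apply pow_le; apply binom_ge0).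
  ring.
Qed.

Lemma Cmod_Aterm_eq0 x y n k : (2 * k < n)%nat -> Cmod (Aterm x y n k) = 0.
Proof. intros Hkn; rewrite Cmod_Aterm, (binom_out (2 * k) n) by exact Hkn; ring. Qed.

Section AtermBound.

Variables (x y : C) (u : R).
Hypothesis Hu : 0 <= u.
Hypothesis Hroot : u ^ 2 * Cmod y = 16 * Cmod x * (1 + u).
Let rho := 16 * Cmod x * Cmod y * (1 + u).
Hypothesis Hrho : rho < 1.

Lemma Cmod_Aterm_le_pow j m :
  Cmod (Aterm x y (2 * j + m) (j + m)) <= rho ^ (j + m).
Proof.
  rewrite Cmod_Aterm.
  replace (Z.of_nat (2 * (j + m)) - Z.of_nat (2 * j + m))%Z with (Z.of_nat m) by lia.
  rewrite CpowZ_of_nat, Cmod_Cpown.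
  apply binom_product_le; auto using Cmod_ge_0.
Qed.

Lemma rho_ge0 : 0 <= rho.
Proof.
  unfold rho; pose proof (Cmod_ge_0 x); pose proof (Cmod_ge_0 y).
  apply Rmult_le_pos; [|lra]; apply Rmult_le_pos; lra.
Qed.

Lemma Cmod_Aterm_le_sqrt_pow n k :
  (k <= n)%nat -> Cmod (Aterm x y n k) <= sqrt rho ^ n.
Proof.
  intros Hkn; pose proof rho_ge0 as Hrho0.
  assert (Hs : 0 <= sqrt rho <= 1).
  { split; [apply sqrt_pos|]; rewrite <- sqrt_1; apply sqrt_le_1_alt; lra. }
  destruct (le_lt_dec n (2 * k)) as [Hnk|Hkn'].
  - assert (exists j m, n = (2 * j + m)%nat /\ k = (j + m)%nat) as [j [m [-> ->]]]
      by (exists (n - k)%nat, (2 * k - n)%nat; lia).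
    eapply Rle_trans; [apply Cmod_Aterm_le_pow|].
    rewrite <- (pow2_sqrt rho Hrho0) at 1; rewrite <- pow_mult.
    apply pow_le_pow_le1; [exact Hs | lia].
  - rewrite Cmod_Aterm_eq0 by exact Hkn'; apply pow_le, Hs.
Qed.

Lemma ex_series_Aterm_rows :
  ex_series (fun n => sum_f_R0 (fun k => Cmod (Aterm x y n k)) n).
Proof.
  pose proof rho_ge0 as Hrho0.
  apply (@ex_series_le R_AbsRing R_CompleteNormedModule _
           (fun n => INR (S n) * sqrt rho ^ n)).
  - intros n; change (norm ?z) with (Rabs z).
    rewrite Rabs_pos_eq by (apply cond_pos_sum; intros; apply Cmod_ge_0).
    rewrite Rmult_comm, <- sum_cte; apply sum_Rle; intros k Hk.
    now apply Cmod_Aterm_le_sqrt_pow.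
  - apply ex_series_succ_mul_pow; split; [apply sqrt_pos|].
    rewrite <- sqrt_1; apply sqrt_lt_1_alt; lra.
Qed.

End AtermBound.

Lemma sqrt_add_sqrt_succ_sq (t : R) :
  0 <= t -> (sqrt t + sqrt (1 + t)) ^ 2 = 1 + 2 * sqrt t * (sqrt t + sqrt (1 + t)).
Proof.
  intros Ht; pose proof (sqrt_sqrt t Ht); pose proof (sqrt_sqrt (1 + t) ltac:(lra)).
  nra.
Qed.

Theorem proposition2p2 (x y : C) :
  y <> RtoC 0 ->
  Cmod (Cmult (Cmult (RtoC 16) (Cmult x y))
          (RtoC ((sqrt (Cmod (Cdiv (Cmult (RtoC 4) x) y))
                  + sqrt (1 + Cmod (Cdiv (Cmult (RtoC 4) x) y))) ^ 2))) < 1 ->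
  ex_series (fun n : nat => sum_f_R0 (fun k => Cmod (Aterm x y n k)) n).
Proof.
  intros Hy Hc.
  set (t := Cmod (Cdiv (Cmult (RtoC 4) x) y)) in *.
  set (s := sqrt t + sqrt (1 + t)) in *.
  assert (Ht : t * Cmod y = 4 * Cmod x).
  { unfold t; rewrite Cmod_div, Cmod_mult, Cmod_R, Rabs_pos_eq by (auto; lra).
    field; now apply Rgt_not_eq, Cmod_gt_0. }
  assert (Ht0 : 0 <= t) by apply Cmod_ge_0.
  assert (Hs : s ^ 2 = 1 + 2 * sqrt t * s) by now apply sqrt_add_sqrt_succ_sq.
  apply (ex_series_Aterm_rows x y (2 * sqrt t * s)).
  - pose proof (sqrt_pos t); pose proof (sqrt_pos (1 + t)); unfold s; nra.
  - rewrite <- Hs; pose proof (sqrt_sqrt t Ht0); nra.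
  - rewrite <- Hs; revert Hc.
    rewrite !Cmod_mult, !Cmod_R, (Rabs_pos_eq 16), (Rabs_pos_eq (s ^ 2)) by (try apply pow2_ge_0; lra).
    lra.
Qed.
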